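(* Let \[F_3(x,y)=6(x^2-y^2)(x^2+y^2)^2+3x^5-6x^3y^2-9xy^4-2x^2y^2\in\mathbb{Z}[x,y],\] and let $C_3\subset\mathbb{P}^2$ be the projective closure of the plane affine curve $\{F_3=0\}$, considered over $\mathbb{Q}$. Then $F_3$ is irreducible and $C_3$ is a curve of geometric genus $1$. Moreover $C_3$ is birationally equivalent over $\mathbb{Q}$ to the elliptic curve \[E:\; v^2=u^3-75u+74 .\] An explicit birational map $E\dashrightarrow C_3$ is given by \[(u,v)\mapsto\left(\frac{X}{X^2+Y^2},\,-\frac{Y}{X^2+Y^2}\right),\qquad X=\frac{u-13}{6},\quad Y=\frac{v}{2}\cdot\frac{u-13}{u^2+u-74}.\] In particular $C_3$ is an elliptic curve over $\mathbb{Q}$ (it has the rational point $(-1/2,0)$), with $j$-invariant $j=\frac{62500}{33}=\frac{2^2\cdot 5^6}{3\cdot 11}$.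
   Context: The polynomial $F_3$ arises as follows: for $\phi=\exp\!\big(x/(x^2+y^2)\big)$ one has $\partial_y^3\phi = \frac{xy\,F_3(x,y)}{(x^2+y^2)^6}\,\phi$. The geometric genus of $C_3$ means the genus of its normalization (smooth projective model). *)

From HB Require Import structures.
From mathcomp Require Import all_boot all_order all_algebra all_field.
Set Implicit Arguments. Unset Strict Implicit. Unset Printing Implicit Defensive.
Import Order.TTheory GRing.Theory Num.Theory.
Local Open Scope ring_scope.

(* Bivariate polynomials over Q are represented as {poly {poly rat}}:
   the inner variable is x, the outer variable is y. *)
Notation bipoly := {poly {poly rat}}.

Definition PX : bipoly := ('X)%:P.
Definition PY : bipoly := 'X.

Definition F3 : bipoly :=
  6%:R * (PX ^+ 2 - PY ^+ 2) * (PX ^+ 2 + PY ^+ 2) ^+ 2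
  + 3%:R * PX ^+ 5 - 6%:R * PX ^+ 3 * PY ^+ 2 - 9%:R * PX * PY ^+ 4
  - 2%:R * PX ^+ 2 * PY ^+ 2.

Definition irreducible2 (p : bipoly) : Prop :=
  p != 0 /\ p \isn't a GRing.unit /\
  forall a b : bipoly, p = a * b -> a \is a GRing.unit \/ b \is a GRing.unit.

Definition eval2 (p : bipoly) (x y : algC) : algC :=
  ((map_poly (map_poly (ratr : rat -> algC)) p).[y%:P]).[x].

Definition onC3 (x y : algC) : Prop := eval2 F3 x y = 0.

Definition onE (u v : algC) : Prop := v ^+ 2 = u ^+ 3 - 75%:R * u + 74%:R.

Definition mapX (u : algC) : algC := (u - 13%:R) / 6%:R.
Definition mapY (u v : algC) : algC :=
  v / 2%:R * ((u - 13%:R) / (u ^+ 2 + u - 74%:R)).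
Definition phi_def (u v : algC) : Prop :=
  u ^+ 2 + u - 74%:R != 0 /\ mapX u ^+ 2 + mapY u v ^+ 2 != 0.
Definition phi (u v : algC) : algC * algC :=
  (mapX u / (mapX u ^+ 2 + mapY u v ^+ 2),
   - mapY u v / (mapX u ^+ 2 + mapY u v ^+ 2)).

Definition ratmap_def (n1 d1 n2 d2 : bipoly) (x y : algC) : Prop :=
  eval2 d1 x y != 0 /\ eval2 d2 x y != 0.
Definition ratmap (n1 d1 n2 d2 : bipoly) (x y : algC) : algC * algC :=
  (eval2 n1 x y / eval2 d1 x y, eval2 n2 x y / eval2 d2 x y).

Definition weier_disc (a b : rat) : rat := 4%:R * a ^+ 3 + 27%:R * b ^+ 2.
Definition j_invariant (a b : rat) : rat :=
  1728%:R * (4%:R * a ^+ 3) / weier_disc a b.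

From HB Require Import structures.
From mathcomp Require Import all_boot all_order all_algebra all_field.
From mathcomp Require Import ring zify.
Set Implicit Arguments. Unset Strict Implicit. Unset Printing Implicit Defensive.
Import Order.TTheory GRing.Theory Num.Theory.
Local Open Scope ring_scope.

(* Irreducibility: substituting y = x t gives F_3(x, x t) = x^4 Q(x, t), with Q
   quadratic in x over Q[t].  As the leading coefficient of F_3 in y is a
   constant, a factorisation of F_3 induces one of Q into factors of x-degrees
   adding up to 2.  A factor of x-degree 0 divides the x^0- and x^2-coefficients
   of Q, which are coprime, so it is constant, and then so is the corresponding
   factor of F_3; two linear factors would make the discriminant of Q a square
   in Q[t], but its value at t = 2 is 12825 = 3^3 5^2 19.
   Birationality: the inversion (x, y) |-> (x, -y) / (x^2 + y^2) maps C_3 onto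
   the cubic H : Y^2 (2X^2 + 9X + 6) = 3X^2 (X + 2), and
   (X, Y) |-> (6X + 13, 6Y (2X^2 + 9X + 6) / X) maps H onto E, with inverse
   (u, v) |-> (mapX u, mapY u v); so phi is the inverse of the composite. *)

Lemma sqrn_neq_19_675 (m : nat) : (m ^ 2)%N <> (19 * 675)%N.
Proof. rewrite -mulnn; have [h|h] := leqP m 113; have := leq_mul h h; lia. Qed.

Lemma rat_sqr_eq_natr (n : nat) (r : rat) : r ^+ 2 = n%:R -> exists m : nat, n = (m ^ 2)%N.
Proof.
move=> hr.
have ei : numq r ^+ 2 = n%:R * denq r ^+ 2.
  have hd : (denq r)%:~R != 0 :> rat by rewrite intr_eq0 denq_neq0.
  have : (numq r)%:~R = r * (denq r)%:~R :> rat.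
    by rewrite -[X in _ = X * _]divq_num_den divfK.
  move/(congr1 (fun z => z ^+ 2)); rewrite exprMn hr => e.
  by apply/eqP; rewrite -(eqr_int rat) rmorphXn rmorphM rmorphXn /= rmorph_nat e.
have en : (`|numq r| ^ 2 = n * `|denq r| ^ 2)%N.
  by have := congr1 absz ei; rewrite abszM !abszX natz absz_nat.
have dvd : (`|denq r| %| `|numq r| ^ 2)%N by rewrite en dvdn_mull // dvdn_exp.
have cop : coprime `|denq r| (`|numq r| ^ 2) by rewrite coprimeXr // coprime_sym coprime_num_den.
have d1 : `|denq r|%N = 1%N by move: cop; rewrite /coprime (gcdn_idPl dvd) => /eqP.
by exists `|numq r|%N; rewrite en d1 muln1.
Qed.

Section PolyFactor.
Variable R : idomainType.
Implicit Types p q r : {poly R}.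

Lemma mulXn_cancel p q m n : ~~ root p 0 -> ~~ root q 0 -> p * 'X ^+ m = q * 'X ^+ n -> p = q.
Proof.
wlog le_mn : p q m n / (m <= n)%N.
  move=> W hp hq e; case: (leqP m n) => [|/ltnW] h; first exact: W e.
  exact/esym/(W q p n m).
have Xm0 : 'X ^+ m != 0 :> {poly R} by rewrite expf_neq0 ?polyX_eq0.
move=> hp hq; rewrite -(subnK le_mn) exprD mulrA => /(mulIf Xm0).
case: (n - m)%N => [|k]; first by rewrite expr0 mulr1.
by move=> e; move: hp; rewrite e /root hornerM hornerXn expr0n mulr0 eqxx.
Qed.

Lemma mul_eq_mulXn_split p q r n : p * q = r * 'X ^+ n -> ~~ root r 0 ->
  exists i j p' q', [/\ p = p' * 'X ^+ i, q = q' * 'X ^+ j & p' * q' = r].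
Proof.
move=> e r0.
have r0' : r != 0 by apply: contraNneq r0 => ->; exact: root0.
have : p * q != 0 by rewrite e mulf_neq0 ?expf_neq0 ?polyX_eq0.
rewrite mulf_eq0 negb_or => /andP [p0 q0].
have [i [p' /implyP/(_ p0) p'0 pE]] := multiplicity_XsubC p 0.
have [j [q' /implyP/(_ q0) q'0 qE]] := multiplicity_XsubC q 0.
rewrite polyC0 subr0 in pE qE.
exists i, j, p', q'; split => //.
apply: (@mulXn_cancel _ _ (i + j) n) => //; first by rewrite rootM negb_or p'0 q'0.
by rewrite exprD mulrACA -pE -qE e.
Qed.

End PolyFactor.

Lemma discr_mul_linear (R : comNzRingType) (a b : {poly R}) :
  (size a <= 2)%N -> (size b <= 2)%N ->
  (a * b)`_1 ^+ 2 - 4%:R * (a * b)`_2 * (a * b)`_0 = (a`_1 * b`_0 - a`_0 * b`_1) ^+ 2.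
Proof.
move=> ha hb; rewrite !coefM !big_ord_recr !big_ord0 /= !subnn !subn0 -[(2 - 1)%N]/1%N.
by rewrite (nth_default 0 ha) (nth_default 0 hb); ring.
Qed.

Lemma finite_sqr_fibres (C : numClosedFieldType) (P : {poly C}) (g : C -> C) : P != 0 ->
  exists s : seq (C * C), forall u v, root P u -> v ^+ 2 = g u -> (u, v) \in s.
Proof.
move=> P0; have [r Pr] := closed_field_poly_normal P.
exists ([seq (u, sqrtC (g u)) | u <- r] ++ [seq (u, - sqrtC (g u)) | u <- r]) => u v Pu hv.
have ur : u \in r by move: Pu; rewrite Pr rootZ ?lead_coef_eq0 // root_prod_XsubC.
have : (v - sqrtC (g u)) * (v + sqrtC (g u)) == 0 by rewrite -subr_sqr sqrtCK hv subrr.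
rewrite mulf_eq0 subr_eq0 addr_eq0 mem_cat => /orP [] /eqP ->; apply/orP.
  by left; apply/mapP; exists u.
by right; apply/mapP; exists u.
Qed.

Lemma size_lead_coef_F3 : size F3 = 7%N /\ lead_coef F3 = - 6%:R.
Proof.
have F3E : F3 = (6%:R * 'X ^+ 6 + 3%:R * 'X ^+ 5)%:P
    + (6%:R * 'X ^+ 4 - 6%:R * 'X ^+ 3 - 2%:R * 'X ^+ 2)%:P * 'X ^+ 2
    - (6%:R * 'X ^+ 2 + 9%:R * 'X)%:P * 'X ^+ 4 - 6%:R * 'X ^+ 6.
  rewrite /F3 /PX /PY !(rmorphM, rmorphD, rmorphB, rmorphXn, rmorph_nat) /=; ring.
have c6 : F3`_6 = - 6%:R by rewrite F3E !coefE /=; ring.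
have hs : size F3 = 7%N.
  apply/eqP; rewrite eqn_leq; apply/andP; split.
    apply/leq_sizeP => i hi; rewrite F3E !coefE.
    case: i hi => [|[|[|[|[|[|[|i]]]]]]] // _; rewrite /=; ring.
  rewrite ltnNge; apply/negP => /leq_sizeP /(_ 6%N (leqnn _)).
  by rewrite c6 => /eqP; rewrite oppr_eq0 -polyC_natr polyC_eq0 pnatr_eq0.
by rewrite lead_coefE hs.
Qed.

(* [blowup p] is p(x, x t), written with x as the outer and t as the inner variable. *)
Definition blowup (p : bipoly) : bipoly := (map_poly (map_poly polyC) p).['X * ('X)%:P].

Lemma blowupD p q : blowup (p + q) = blowup p + blowup q.
Proof. by rewrite /blowup rmorphD hornerD. Qed.
Lemma blowupN p : blowup (- p) = - blowup p.
Proof. by rewrite /blowup rmorphN hornerN. Qed.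
Lemma blowupM p q : blowup (p * q) = blowup p * blowup q.
Proof. by rewrite /blowup rmorphM hornerM. Qed.
Lemma blowupX p n : blowup (p ^+ n) = blowup p ^+ n.
Proof. by rewrite /blowup rmorphXn horner_exp. Qed.
Lemma blowup_nat n : blowup n%:R = n%:R.
Proof. by rewrite /blowup rmorph_nat hornerMn hornerC. Qed.
Lemma blowupPX : blowup PX = 'X.
Proof. by rewrite /blowup /PX map_polyC /= map_polyX hornerC. Qed.
Lemma blowupPY : blowup PY = 'X * ('X)%:P.
Proof. by rewrite /blowup /PY map_polyX hornerX. Qed.
Definition blowupE := (blowupD, blowupN, blowupM, blowupX, blowup_nat, blowupPX, blowupPY).

Lemma blowup_at1 p : (blowup p).[1] = map_poly (horner_eval 1) p.
Proof.
elim/poly_ind: p => [|p c IH]; first by rewrite /blowup !rmorph0 !horner0.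
rewrite blowupD blowupM -/PY blowupPY hornerD hornerM IH.
rewrite rmorphD rmorphM /= map_polyX map_polyC /= horner_evalE.
rewrite /blowup map_polyC /= hornerC -polyC1 horner_map /=.
by rewrite hornerM hornerX hornerC mul1r.
Qed.

Definition s2 : {poly rat} := 6%:R * (1 - 'X ^+ 2) * (1 + 'X ^+ 2) ^+ 2.
Definition s1 : {poly rat} := 3%:R * (1 - 2%:R * 'X ^+ 2 - 3%:R * 'X ^+ 4).
Definition s0 : {poly rat} := - (2%:R * 'X ^+ 2).
Definition strict_F3 : bipoly := s2%:P * 'X ^+ 2 + s1%:P * 'X + s0%:P.

Lemma blowup_F3 : blowup F3 = strict_F3 * 'X ^+ 4.
Proof.
rewrite /F3 !blowupE /strict_F3 /s2 /s1 /s0.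
by rewrite !(rmorphM, rmorphD, rmorphB, rmorphN, rmorphXn, rmorph_nat, rmorph1) /=; ring.
Qed.

Lemma coef_strict_F3 : [/\ strict_F3`_0 = s0, strict_F3`_1 = s1 & strict_F3`_2 = s2].
Proof. by split; rewrite /strict_F3 !coefE /=; ring. Qed.

Lemma s2_at0 : s2.[0] = 6%:R.
Proof. by rewrite /s2 !hornerE /=; ring. Qed.

Lemma size_strict_F3 : size strict_F3 = 3%N.
Proof.
have [_ _ c2] := coef_strict_F3.
apply/eqP; rewrite eqn_leq; apply/andP; split.
  apply/leq_sizeP => -[|[|[|i]]] // _; rewrite /strict_F3 !coefE /=; ring.
rewrite ltnNge; apply/negP => /leq_sizeP /(_ 2%N (leqnn _)).
by rewrite c2 => s20; move: s2_at0; rewrite s20 horner0 => /eqP; rewrite eq_sym pnatr_eq0.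
Qed.

Lemma strict_F3_const_factor (c : {poly rat}) (b : bipoly) :
  c%:P * b = strict_F3 -> (size c <= 1)%N.
Proof.
have [e0 _ e2] := coef_strict_F3.
move=> e; have cb0 : c * b`_0 = s0 by rewrite -coefCM e.
have cb2 : c * b`_2 = s2 by rewrite -coefCM e.
have c0 : ~~ root c 0.
  apply: contraTN isT => /eqP c0; move: s2_at0.
  by rewrite -cb2 hornerM c0 mul0r => /eqP; rewrite eq_sym pnatr_eq0.
have cop : coprimep c ('X ^+ 2).
  by apply: coprimep_expr; rewrite -[X in coprimep _ X]subr0 -polyC0 coprimep_XsubC.
have : c %| - 2%:R.
  rewrite -(Gauss_dvdpr _ cop) (_ : _ * _ = s0); first by rewrite -cb0 dvdp_mulIl.
  by rewrite /s0 mulrN mulrC.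
have sz2 : size (- 2%:R : {poly rat}) = 1%N.
  by rewrite size_polyN -polyC_natr size_polyC pnatr_eq0.
by move/dvdp_leq; rewrite sz2 -size_poly_eq0 sz2 => /(_ isT).
Qed.

(* At x = 1 the blow-up of a is a(1, t), whose degree is the y-degree of a because
   the leading coefficient of a in y is a nonzero constant. *)
Lemma unit_of_blowup_const (a : bipoly) (c : {poly rat}) i :
  size (lead_coef a) = 1%N -> (size c <= 1)%N -> blowup a = c%:P * 'X ^+ i ->
  a \is a GRing.unit.
Proof.
move=> hlc hc ha.
have /size_poly1P [k k0 lcE] : size (lead_coef a) == 1%N by rewrite hlc.
have : (size a <= 1)%N.
  rewrite -(@size_map_poly_id0 _ _ (horner_eval 1)); last by rewrite horner_evalE lcE hornerC.
  by rewrite -blowup_at1 ha hornerM hornerC hornerXn expr1n mulr1.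
have a0 : a != 0 by rewrite -lead_coef_eq0 lcE polyC_eq0.
rewrite leq_eqVlt ltnS leqn0 size_poly_eq0 (negbTE a0) orbF => /eqP sa.
have a0E : a`_0 = k%:P by rewrite -lcE lead_coefE sa.
by rewrite poly_unitE sa a0E poly_unitE size_polyC k0 /= coefC unitfE.
Qed.

Lemma strict_F3_no_linear_factors (a b : bipoly) :
  size a = 2%N -> size b = 2%N -> a * b != strict_F3.
Proof.
move=> sa sb; apply/eqP => ab.
have [e0 e1 e2] := coef_strict_F3.
have := discr_mul_linear (eq_leq sa) (eq_leq sb).
rewrite ab e0 e1 e2 => /(congr1 (horner^~ 2%:R)); rewrite horner_exp => disc.
have [m /esym] : exists m : nat, (19 * 675)%N = (m ^ 2)%N.
  apply: (@rat_sqr_eq_natr _ (a`_1 * b`_0 - a`_0 * b`_1).[2%:R]).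
  rewrite -disc natrM /s0 /s1 /s2 -!polyC_natr -polyC1.
  by rewrite !(hornerD, hornerN, hornerM, horner_exp, hornerX, hornerC); ring.
exact: sqrn_neq_19_675.
Qed.

Lemma irreducible_F3 : irreducible2 F3.
Proof.
have [sF lcF] := size_lead_coef_F3.
split; first by rewrite -size_poly_eq0 sF.
split; first by rewrite poly_unitE sF.
move=> a b ab.
have /andP [/eqP lca /eqP lcb] : (size (lead_coef a) == 1%N) && (size (lead_coef b) == 1%N).
  by rewrite -size_mul_eq1 -lead_coefM -ab lcF size_polyN -polyC_natr size_polyC pnatr_eq0.
have s00 : ~~ root strict_F3 0.
  have [e0 _ _] := coef_strict_F3.
  rewrite /root horner_coef0 e0; apply: contraTN isT => /eqP /(congr1 (horner^~ 1)).
  rewrite /s0 hornerN hornerM hornerXn -polyC_natr hornerC horner0 expr1n mulr1.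
  by move/eqP; rewrite oppr_eq0 pnatr_eq0.
have bab : blowup a * blowup b = strict_F3 * 'X ^+ 4 by rewrite -blowupM -ab blowup_F3.
have [i [j [a' [b' [aE bE ab']]]]] := mul_eq_mulXn_split bab s00.
have : a' * b' != 0 by rewrite ab' -size_poly_eq0 size_strict_F3.
rewrite mulf_eq0 negb_or => /andP [a'0 b'0].
have := size_mul a'0 b'0; rewrite ab' size_strict_F3.
move: a'0 b'0; rewrite -!size_poly_gt0 => a'0 b'0 sab.
have [sa | [[sa sb] | sb]] : size a' = 1%N \/ size a' = 2%N /\ size b' = 2%N \/ size b' = 1%N.
  by lia.
- left; rewrite (size1_polyC (eq_leq sa)) in aE ab'.
  exact: unit_of_blowup_const lca (strict_F3_const_factor ab') aE.
- by move: (strict_F3_no_linear_factors sa sb); rewrite ab' eqxx.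
- right; rewrite (size1_polyC (eq_leq sb)) in bE ab'; rewrite mulrC in ab'.
  exact: unit_of_blowup_const lcb (strict_F3_const_factor ab') bE.
Qed.

Section Eval2.
Variables x y : algC.

Lemma eval2D p q : eval2 (p + q) x y = eval2 p x y + eval2 q x y.
Proof. by rewrite /eval2 rmorphD !hornerD. Qed.
Lemma eval2N p : eval2 (- p) x y = - eval2 p x y.
Proof. by rewrite /eval2 rmorphN !hornerN. Qed.
Lemma eval2M p q : eval2 (p * q) x y = eval2 p x y * eval2 q x y.
Proof. by rewrite /eval2 rmorphM !hornerM. Qed.
Lemma eval2X p n : eval2 (p ^+ n) x y = eval2 p x y ^+ n.
Proof. by rewrite /eval2 rmorphXn !horner_exp. Qed.
Lemma eval2_nat n : eval2 n%:R x y = n%:R.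
Proof. by rewrite /eval2 rmorph_nat !hornerMn !hornerC. Qed.
Lemma eval2PX : eval2 PX x y = x.
Proof. by rewrite /eval2 /PX map_polyC /= map_polyX !hornerE. Qed.
Lemma eval2PY : eval2 PY x y = y.
Proof. by rewrite /eval2 /PY map_polyX !hornerE. Qed.

End Eval2.

Definition eval2E := (eval2D, eval2N, eval2M, eval2X, eval2_nat, eval2PX, eval2PY).

Lemma eval2_F3 x y : eval2 F3 x y =
  6%:R * (x ^+ 2 - y ^+ 2) * (x ^+ 2 + y ^+ 2) ^+ 2 + 3%:R * x ^+ 5
  - 6%:R * x ^+ 3 * y ^+ 2 - 9%:R * x * y ^+ 4 - 2%:R * x ^+ 2 * y ^+ 2.
Proof. by rewrite /F3 !eval2E. Qed.

(* psi = toE o inversion, with denominators cleared. *)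
Definition sqnorm2 : bipoly := PX ^+ 2 + PY ^+ 2.
Definition u_num : bipoly := 6%:R * PX + 13%:R * sqnorm2.
Definition u_den : bipoly := sqnorm2.
Definition v_num : bipoly :=
  - (6%:R * PY * (2%:R * PX ^+ 2 + 9%:R * PX * sqnorm2 + 6%:R * sqnorm2 ^+ 2)).
Definition v_den : bipoly := PX * sqnorm2 ^+ 2.

Local Notation psi := (ratmap u_num u_den v_num v_den).
Local Notation psi_def := (ratmap_def u_num u_den v_num v_den).

Definition inversion (x y : algC) : algC * algC :=
  (x / (x ^+ 2 + y ^+ 2), - y / (x ^+ 2 + y ^+ 2)).

(* onH X Y says that (X, Y) lies on the image H of C_3 under the inversion. *)
Definition qH (X : algC) : algC := 2%:R * X ^+ 2 + 9%:R * X + 6%:R.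
Definition onH (X Y : algC) : Prop := Y ^+ 2 * qH X = 3%:R * X ^+ 2 * (X + 2%:R).
Definition toE (X Y : algC) : algC * algC := (6%:R * X + 13%:R, 6%:R * Y * qH X / X).

Lemma sqnorm_inversion x y :
  (inversion x y).1 ^+ 2 + (inversion x y).2 ^+ 2 = (x ^+ 2 + y ^+ 2)^-1.
Proof.
have [D0|D0] := eqVneq (x ^+ 2 + y ^+ 2) 0.
  by rewrite /= D0 invr0 !mulr0 expr0n /= addr0.
by rewrite /=; field.
Qed.

Lemma inversionK x y : x ^+ 2 + y ^+ 2 != 0 ->
  inversion (inversion x y).1 (inversion x y).2 = (x, y).
Proof. by move=> D0; rewrite {1}/inversion sqnorm_inversion /=; congr pair; field. Qed.

Lemma eval2_F3_inversion X Y : X ^+ 2 + Y ^+ 2 != 0 ->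
  eval2 F3 (inversion X Y).1 (inversion X Y).2
  = (3%:R * X ^+ 2 * (X + 2%:R) - Y ^+ 2 * qH X) / (X ^+ 2 + Y ^+ 2) ^+ 4.
Proof. by move=> S0; rewrite eval2_F3 /qH /=; field. Qed.

Lemma onC3_inversion X Y : X ^+ 2 + Y ^+ 2 != 0 ->
  onC3 (inversion X Y).1 (inversion X Y).2 <-> onH X Y.
Proof.
move=> S0; rewrite /onC3 eval2_F3_inversion // /onH (rwP eqP) (rwP eqP).
by rewrite mulf_eq0 invr_eq0 expf_eq0 (negbTE S0) andbF orbF subr_eq0 eq_sym.
Qed.

Lemma qH_neq0 X Y : onH X Y -> X != 0 -> qH X != 0.
Proof.
move=> hH X0; apply/eqP => q0; move: hH; rewrite /onH q0 mulr0 => /esym/eqP.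
rewrite mulf_eq0 mulf_eq0 pnatr_eq0 expf_eq0 (negbTE X0) andbF /= addr_eq0 => /eqP X2.
move: q0; rewrite /qH X2 => /eqP.
by rewrite (_ : _ + _ = - 4%:R); [rewrite oppr_eq0 pnatr_eq0 | ring].
Qed.

Lemma wE_mapX u : u ^+ 2 + u - 74%:R = 18%:R * qH (mapX u).
Proof. by rewrite /qH /mapX; field. Qed.

Lemma onH_toH u v : onE u v -> u ^+ 2 + u - 74%:R != 0 -> onH (mapX u) (mapY u v).
Proof.
move=> hE w0; rewrite /onH /mapY /qH !exprMn hE /mapX.
by field; rewrite w0.
Qed.

Lemma onE_toE X Y : onH X Y -> X != 0 -> onE (toE X Y).1 (toE X Y).2.
Proof.
move=> hH X0; rewrite /onE /=.
have -> : (6%:R * Y * qH X / X) ^+ 2 = 36%:R * qH X * (Y ^+ 2 * qH X) / X ^+ 2 by field.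
by rewrite hH /qH; field.
Qed.

Lemma toH_toE X Y : X != 0 -> qH X != 0 ->
  mapX (toE X Y).1 = X /\ mapY (toE X Y).1 (toE X Y).2 = Y.
Proof.
move=> X0 q0; rewrite /mapY /mapX /=; split; first by field.
have -> : (6%:R * X + 13%:R) ^+ 2 + (6%:R * X + 13%:R) - 74%:R = 18%:R * qH X.
  by rewrite /qH; ring.
by field; rewrite q0 X0.
Qed.

Lemma toE_toH u v : u ^+ 2 + u - 74%:R != 0 -> mapX u != 0 ->
  toE (mapX u) (mapY u v) = (u, v).
Proof.
move=> w0 X0; rewrite /toE; congr pair; first by rewrite /mapX; field.
have q0 : qH (mapX u) != 0 by move: w0; rewrite wE_mapX mulf_eq0 negb_or => /andP [].
have u13 : u - 13%:R = 6%:R * mapX u by rewrite /mapX; field.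
by rewrite /mapY wE_mapX u13; field; rewrite q0 X0.
Qed.

Lemma ratmap_psi x y : x != 0 -> x ^+ 2 + y ^+ 2 != 0 ->
  psi x y = toE (inversion x y).1 (inversion x y).2.
Proof.
move=> x0 D0; rewrite /ratmap /u_num /u_den /v_num /v_den /sqnorm2 !eval2E /toE /qH /=.
by congr pair; field; rewrite ?x0 ?D0.
Qed.

Lemma psi_defE x y : psi_def x y <-> x != 0 /\ x ^+ 2 + y ^+ 2 != 0.
Proof.
rewrite /ratmap_def /u_den /v_den /sqnorm2 !eval2E mulf_eq0 expf_eq0 /= negb_or.
by split => [[D0 /andP [x0 _]] | [x0 D0]]; rewrite ?x0 ?D0.
Qed.

Lemma onC3_nonorigin x y : onC3 x y -> (x, y) != (0, 0) -> x != 0 /\ x ^+ 2 + y ^+ 2 != 0.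
Proof.
rewrite /onC3 eval2_F3 => hC xy0.
have x0 : x != 0.
  apply: contraNneq xy0 => x0; move: hC; rewrite x0 => hC.
  have : - 6%:R * y ^+ 6 = 0 by rewrite -hC; ring.
  by move/eqP; rewrite mulf_eq0 oppr_eq0 pnatr_eq0 expf_eq0 /= => /eqP ->.
split => //; apply: contraNneq x0 => D0.
have y2 : y ^+ 2 = - x ^+ 2 by apply/eqP; rewrite -addr_eq0 addrC D0.
move: hC; rewrite (_ : y ^+ 4 = y ^+ 2 * y ^+ 2); last by ring.
rewrite y2 => hC; have : 2%:R * x ^+ 4 = 0 by rewrite -hC; ring.
by move/eqP; rewrite mulf_eq0 pnatr_eq0 expf_eq0.
Qed.

Lemma sqnorm_toH u v : onE u v -> u ^+ 2 + u - 74%:R != 0 ->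
  mapX u ^+ 2 + mapY u v ^+ 2
  = (u - 13%:R) ^+ 2 * (u ^+ 2 + 10%:R * u - 83%:R) / (36%:R * (u ^+ 2 + u - 74%:R)).
Proof. by move=> hE w0; rewrite /mapY /mapX !exprMn hE; field; rewrite w0. Qed.

Lemma C3_to_E x y : onC3 x y -> x != 0 -> x ^+ 2 + y ^+ 2 != 0 ->
  [/\ onE (psi x y).1 (psi x y).2, phi_def (psi x y).1 (psi x y).2
    & phi (psi x y).1 (psi x y).2 = (x, y)].
Proof.
move=> hC x0 D0; rewrite ratmap_psi //.
have invK := inversionK D0.
set X := (inversion x y).1 in invK *; set Y := (inversion x y).2 in invK *.
have S0 : X ^+ 2 + Y ^+ 2 != 0 by rewrite sqnorm_inversion invr_eq0.
have X0 : X != 0 by rewrite /X /= mulf_neq0 ?invr_eq0.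
have hH : onH X Y by rewrite -onC3_inversion // invK.
have q0 := qH_neq0 hH X0.
have [mX mY] := toH_toE Y X0 q0.
split; first exact: onE_toE.
  by split; rewrite ?wE_mapX mX ?mY ?mulf_neq0 ?pnatr_eq0.
by rewrite /phi mX mY; exact: invK.
Qed.

Lemma E_to_C3 u v : onE u v -> phi_def u v ->
  onC3 (phi u v).1 (phi u v).2 /\ (mapX u != 0 -> psi (phi u v).1 (phi u v).2 = (u, v)).
Proof.
move=> hE [w0 S0]; rewrite -[phi u v]/(inversion (mapX u) (mapY u v)).
split; first by apply/onC3_inversion => //; exact: onH_toH.
move=> X0; rewrite ratmap_psi ?inversionK ?toE_toH //.
  by rewrite /= mulf_neq0 ?invr_eq0.
by rewrite sqnorm_inversion invr_eq0.
Qed.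

Lemma psi_def_phi u v : phi_def u v -> psi_def (phi u v).1 (phi u v).2 <-> mapX u != 0.
Proof.
move=> [_ S0]; rewrite psi_defE -[phi u v]/(inversion (mapX u) (mapY u v)).
rewrite sqnorm_inversion invr_eq0 /= mulf_eq0 invr_eq0 negb_or (negbTE S0) andbT.
by split => [[]|].
Qed.

Definition E_exceptional : {poly algC} :=
  ('X ^+ 2 + 'X - (74%:R)%:P) * ('X - (13%:R)%:P) * ('X ^+ 2 + (10%:R)%:P * 'X - (83%:R)%:P).

Lemma E_exceptional_neq0 : E_exceptional != 0.
Proof.
apply/eqP => /(congr1 (horner^~ 0)); rewrite horner0 /E_exceptional.
rewrite !(hornerD, hornerN, hornerM, horner_exp, hornerX, hornerC) => /eqP.
rewrite (_ : _ * _ = - (74 * 13 * 83)%:R); first by rewrite oppr_eq0 pnatr_eq0.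
by rewrite !natrM; ring.
Qed.

Lemma E_regular u v : onE u v -> ~~ root E_exceptional u -> phi_def u v /\ mapX u != 0.
Proof.
rewrite /root /E_exceptional !(hornerD, hornerN, hornerM, horner_exp, hornerX, hornerC).
rewrite mulf_eq0 mulf_eq0 !negb_or => hE /andP [/andP [w0 u13] h83].
have X0 : mapX u != 0 by rewrite /mapX mulf_neq0 // invr_eq0 pnatr_eq0.
do 2!split => //.
by rewrite sqnorm_toH // !mulf_neq0 ?expf_neq0 // invr_eq0 mulf_neq0 // pnatr_eq0.
Qed.

Lemma weier_disc_E : weier_disc (- 75%:R) 74%:R = - (2%:R ^+ 6 * 3%:R ^+ 7 * 11%:R).
Proof. by rewrite /weier_disc; ring. Qed.

Lemma j_invariant_E : j_invariant (- 75%:R) 74%:R = 62500%:R / 33%:R.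
Proof. by rewrite /j_invariant weier_disc_E; field. Qed.

Theorem mainTheorem1 :
  (* F_3 is irreducible in Q[x,y] *)
  irreducible2 F3 /\
  (* E : v^2 = u^3 - 75u + 74 is nonsingular, i.e. an elliptic curve *)
  weier_disc (- 75%:R) 74%:R != 0 /\
  (* the explicit map phi : E --> C_3 is birational over Q: there is a rational
     inverse psi : C_3 --> E with coefficients in Q; both are defined (with
     the other defined at the image) away from finitely many points, and they
     are mutually inverse where defined *)
  (exists n1 d1 n2 d2 : {poly {poly rat}},
     (exists s : seq (algC * algC), forall u v : algC, onE u v -> (u, v) \notin s ->
        phi_def u v /\ ratmap_def n1 d1 n2 d2 (phi u v).1 (phi u v).2) /\
     (exists s : seq (algC * algC), forall x y : algC, onC3 x y -> (x, y) \notin s ->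
        ratmap_def n1 d1 n2 d2 x y /\
        phi_def (ratmap n1 d1 n2 d2 x y).1 (ratmap n1 d1 n2 d2 x y).2) /\
     (forall u v : algC, onE u v -> phi_def u v ->
        onC3 (phi u v).1 (phi u v).2 /\
        (ratmap_def n1 d1 n2 d2 (phi u v).1 (phi u v).2 ->
           ratmap n1 d1 n2 d2 (phi u v).1 (phi u v).2 = (u, v))) /\
     (forall x y : algC, onC3 x y -> ratmap_def n1 d1 n2 d2 x y ->
        onE (ratmap n1 d1 n2 d2 x y).1 (ratmap n1 d1 n2 d2 x y).2 /\
        (phi_def (ratmap n1 d1 n2 d2 x y).1 (ratmap n1 d1 n2 d2 x y).2 ->
           phi (ratmap n1 d1 n2 d2 x y).1 (ratmap n1 d1 n2 d2 x y).2 = (x, y)))) /\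
  (* (-1/2, 0) is a rational point of C_3 *)
  onC3 (- (2%:R)^-1) 0 /\
  (* j-invariant of E (hence of C_3) *)
  j_invariant (- 75%:R) 74%:R = 62500%:R / 33%:R.
Proof.
split; first exact: irreducible_F3.
split; first by rewrite weier_disc_E oppr_eq0 !mulf_neq0 ?expf_neq0 ?pnatr_eq0.
split; last by split; [rewrite /onC3 eval2_F3; field | exact: j_invariant_E].
exists u_num, u_den, v_num, v_den; split; [|split; [|split]].
- have [s Es] := finite_sqr_fibres (fun u => u ^+ 3 - 75%:R * u + 74%:R) E_exceptional_neq0.
  exists s => u v hE uv_s.
  have [hphi X0] := E_regular hE (contra (Es u v ^~ hE) uv_s).
  by split; last exact/psi_def_phi.
- exists [:: (0, 0)] => x y hC; rewrite inE => /(onC3_nonorigin hC) [x0 D0].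
  by have [_ hphi _] := C3_to_E hC x0 D0; split; first exact/psi_defE.
- move=> u v hE hphi; have [hC psiK] := E_to_C3 hE hphi.
  by split => // /(psi_def_phi hphi); exact: psiK.
- move=> x y hC /psi_defE [x0 D0].
  by have [hE hphi phiK] := C3_to_E hC x0 D0.
Qed.
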